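(* Let $n\ge 2$, and let $A=(a_{ij})$ be a real symmetric $n\times n$ matrix with eigenvalues $\mu_1\ge \mu_2\ge \cdots\ge \mu_n$. Assume that $0\le a_{ij}\le 1$ for all $i\ne j$, and $a_{ii}\ge 0$ for all $1\le i\le n$. Then \[ \mu_{n-1}+\mu_n\ge -\frac{2n}{3}. \] In particular, $\mu_{n-1}\ge -\frac{n}{3}$. *)

From mathcomp Require Import all_boot all_order all_algebra.
From mathcomp Require Import reals.
Set Implicit Arguments. Unset Strict Implicit. Unset Printing Implicit Defensive.
Import Order.TTheory GRing.Theory Num.Theory.
Local Open Scope ring_scope.

(* [mu] is the list of eigenvalues of the square matrix [A], counted with
   (algebraic) multiplicity and listed in non-increasing order
   mu_1 >= mu_2 >= ... >= mu_n (stored 0-based as mu`_0, ..., mu`_(n-1)):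
   the characteristic polynomial of A splits as prod (X - mu_i). *)
Definition eigenvalues_desc (R : numDomainType) (n : nat) (A : 'M[R]_n)
  (mu : seq R) : Prop :=
  [/\ size mu = n,
      sorted (fun x y => y <= x) mu
    & char_poly A = \prod_(x <- mu) ('X - x%:P)].

From mathcomp Require Import all_boot all_order all_algebra.
From mathcomp Require Import reals.
From mathcomp Require Import ring lra.
Set Implicit Arguments. Unset Strict Implicit. Unset Printing Implicit Defensive.
Import Order.TTheory GRing.Theory Num.Theory.
Local Open Scope ring_scope.

(** The eigenvalues [a = mu_n] and [b = mu_(n-1)] have orthonormal
  eigenvectors [x], [y] (deflate [A] along [x]), and then
  [a + b = sum_ij a_ij g_ij] with [g_ij = x_i x_j + y_i y_j]. As
  [0 <= a_ij <= 1] off the diagonal and [g_ii >= 0], [a_ij g_ij >= (g_ij - |g_ij|)/2];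
  as moreover [sum_ij g_ij = (sum x)^2 + (sum y)^2 >= 0], it suffices that
  [sum_ij |g_ij| <= 4n/3].
  Write [x_i + i y_i = r_i e^(i t_i)], so that [g_ij = r_i r_j cos (t_i - t_j)].
  The majorant [|cos t| <= 2/3 + 7/18 cos 2t - 1/18 cos 4t] gives
  [sum_ij |g_ij| <= 2/3 (sum r_i)^2 + 7/18 |sum r_i e^(2i t_i)|^2].
  Orthonormality reads [sum r_i^2 = 2] and [sum r_i^2 e^(2i t_i) = 0]; Cauchy-Schwarz
  against the projection of [(1,...,1)] orthogonally to [r] then bounds
  [|sum r_i e^(2i t_i)|^2] by [2n - (sum r_i)^2], and [(sum r_i)^2 <= 2n] ends the
  computation. *)

Section FiniteSums.
Variables (R : realFieldType) (n : nat).
Implicit Types u v r p : 'I_n -> R.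

Lemma mulr_sum_sum u v :
  (\sum_i u i) * (\sum_j v j) = \sum_i \sum_j u i * v j.
Proof. by rewrite mulr_suml; under eq_bigr do rewrite mulr_sumr. Qed.

Lemma sum_inner_sqr u v :
  \sum_i \sum_j (u i * u j + v i * v j) = (\sum_i u i) ^+ 2 + (\sum_i v i) ^+ 2.
Proof.
rewrite !expr2 !mulr_sum_sum -big_split.
by apply: eq_bigr => i _; rewrite big_split.
Qed.

Lemma cauchy_schwarz u v :
  (\sum_i u i * v i) ^+ 2 <= (\sum_i u i ^+ 2) * (\sum_i v i ^+ 2).
Proof.
pose a i j := u i ^+ 2 * v j ^+ 2.
have a_sym : \sum_i \sum_j a j i = \sum_i \sum_j a i j by rewrite exchange_big.
rewrite expr2 !mulr_sum_sum -/a.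
apply: (@le_trans _ _ (\sum_i \sum_j (a i j + a j i) / 2)).
  apply: ler_sum => i _; apply: ler_sum => j _; rewrite /a.
  have := sqr_ge0 (u i * v j - u j * v i); nra.
have -> : \sum_i \sum_j (a i j + a j i) / 2
    = (\sum_i \sum_j a i j + \sum_i \sum_j a j i) / 2.
  rewrite -big_split mulr_suml; apply: eq_bigr => i _.
  by rewrite -big_split mulr_suml.
by rewrite a_sym; lra.
Qed.


Lemma sqr_sum_le_orth r p : 0 < \sum_i r i ^+ 2 -> \sum_i r i * p i = 0 ->
  (\sum_i p i) ^+ 2 <= (n%:R - (\sum_i r i) ^+ 2 / \sum_i r i ^+ 2) * \sum_i p i ^+ 2.
Proof.
set rho := \sum_i r i ^+ 2; set s := \sum_i r i => rho_gt0 rp0.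
(* [w] is the projection of the all-ones vector onto the orthogonal of [r]. *)
pose w i := 1 - s / rho * r i.
have wp : \sum_i w i * p i = \sum_i p i.
  rewrite (eq_bigr (fun i => p i - s / rho * (r i * p i))) => [|i _]; last first.
    by rewrite /w; ring.
  by rewrite sumrB -mulr_sumr rp0 mulr0 subr0.
have ww : \sum_i w i ^+ 2 = n%:R - s ^+ 2 / rho.
  rewrite (eq_bigr (fun i => 1 - 2 * (s / rho) * r i + (s / rho) ^+ 2 * r i ^+ 2))
    => [|i _]; last by rewrite /w; ring.
  rewrite big_split sumrB /= -!mulr_sumr sumr_const card_ord -/rho -/s.
  by field; rewrite gt_eqF.
by rewrite -wp -ww cauchy_schwarz.
Qed.

End FiniteSums.

Section AngleDoubling.
Variable R : rcfType.
Implicit Types a b c d : R.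

Definition hypot a b := Num.sqrt (a ^+ 2 + b ^+ 2).

(* [r (cos t, sin t) |-> r (cos 2t, sin 2t)], with [0 |-> 0] *)
Definition dbl_fst a b := (a ^+ 2 - b ^+ 2) / hypot a b.
Definition dbl_snd a b := 2 * a * b / hypot a b.

Lemma hypot_ge0 a b : 0 <= hypot a b.
Proof. exact: sqrtr_ge0. Qed.

Lemma sqr_hypot a b : hypot a b ^+ 2 = a ^+ 2 + b ^+ 2.
Proof. by rewrite sqr_sqrtr // addr_ge0 ?sqr_ge0. Qed.

Lemma hypot_eq0 a b : (hypot a b == 0) = (a == 0) && (b == 0).
Proof. by rewrite -sqrf_eq0 sqr_hypot paddr_eq0 ?sqr_ge0 // !sqrf_eq0. Qed.

Lemma hypot_mul_dbl_fst a b : hypot a b * dbl_fst a b = a ^+ 2 - b ^+ 2.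
Proof.
have [h0|h_neq0] := eqVneq (hypot a b) 0; last by rewrite mulrC divfK.
by move/eqP: (h0); rewrite hypot_eq0 h0 mul0r => /andP[/eqP-> /eqP->]; rewrite subrr.
Qed.

Lemma hypot_mul_dbl_snd a b : hypot a b * dbl_snd a b = 2 * a * b.
Proof.
have [h0|h_neq0] := eqVneq (hypot a b) 0; last by rewrite mulrC divfK.
by move/eqP: (h0); rewrite hypot_eq0 h0 mul0r => /andP[/eqP-> /eqP->]; rewrite !mulr0.
Qed.

Lemma sqr_hypot_dbl a b : dbl_fst a b ^+ 2 + dbl_snd a b ^+ 2 = a ^+ 2 + b ^+ 2.
Proof.
have [h0|h_neq0] := eqVneq (hypot a b) 0.
  by rewrite -[RHS]sqr_hypot /dbl_fst /dbl_snd h0 invr0 !mulr0 expr0n /= addr0.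
apply: (mulfI (expf_neq0 2 h_neq0)).
rewrite mulrDr -!exprMn hypot_mul_dbl_fst hypot_mul_dbl_snd sqr_hypot; ring.
Qed.

Lemma hypot_dbl a b : hypot (dbl_fst a b) (dbl_snd a b) = hypot a b.
Proof. by rewrite /hypot sqr_hypot_dbl. Qed.

Lemma dbl_inner a b c d :
  dbl_fst a b * dbl_fst c d + dbl_snd a b * dbl_snd c d =
  (2 * (a * c + b * d) ^+ 2 - (hypot a b * hypot c d) ^+ 2) / (hypot a b * hypot c d).
Proof. by rewrite /dbl_fst /dbl_snd exprMn !sqr_hypot invfM; ring. Qed.

Lemma sqr_inner_le_hypot a b c d :
  (a * c + b * d) ^+ 2 <= (hypot a b * hypot c d) ^+ 2.
Proof.
rewrite exprMn !sqr_hypot.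
have -> : (a ^+ 2 + b ^+ 2) * (c ^+ 2 + d ^+ 2)
  = (a * c + b * d) ^+ 2 + (a * d - b * c) ^+ 2 by ring.
by rewrite lerDl sqr_ge0.
Qed.

End AngleDoubling.

(* For [g = r cos t] one has [P = r cos 2t] and [S = r cos 4t]. *)
Lemma abs_le_cos_majorant (R : realFieldType) (g r P S : R) :
  0 <= r -> g ^+ 2 <= r ^+ 2 -> P = (2 * g ^+ 2 - r ^+ 2) / r ->
  S = (2 * P ^+ 2 - r ^+ 2) / r -> `|g| <= 2/3 * r + 7/18 * P - 1/18 * S.
Proof.
move=> r_ge0 g_le_r -> ->.
have [r0|r_neq0] := eqVneq r 0.
  move: g_le_r; rewrite r0 expr0n /= => g2_le0.
  have /eqP -> : g == 0 by rewrite -sqrf_eq0 eq_le g2_le0 sqr_ge0.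
  by rewrite invr0 !mulr0 normr0; lra.
have r_gt0 : 0 < r by rewrite lt0r r_neq0.
have abs_g_le_r : `|g| <= r.
  by rewrite -ler_sqr ?nnegrE ?normr_ge0 // real_normK ?num_real.
rewrite -subr_ge0 -(real_normK (num_real g)).
have -> : 2/3 * r + 7/18 * ((2 * `|g| ^+ 2 - r ^+ 2) / r)
    - 1/18 * ((2 * ((2 * `|g| ^+ 2 - r ^+ 2) / r) ^+ 2 - r ^+ 2) / r) - `|g|
  = 2 * (2 * `|g| - r) ^+ 2 * (`|g| + 2 * r) * (r - `|g|) / (18 * r ^+ 3).
  by field.
have abs_g_ge0 := normr_ge0 g.
apply: divr_ge0; last by rewrite mulr_ge0 ?exprn_ge0.
apply: mulr_ge0; last by rewrite subr_ge0.
apply: mulr_ge0; last by lra.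
by rewrite mulr_ge0 ?sqr_ge0.
Qed.

Section SumAbsInner.
Variables (R : rcfType) (n : nat).
Implicit Types x y : 'I_n -> R.

Lemma sum_abs_inner_le_dbl x y :
  \sum_i \sum_j `|x i * x j + y i * y j| <=
    2/3 * (\sum_i hypot (x i) (y i)) ^+ 2 +
    7/18 * ((\sum_i dbl_fst (x i) (y i)) ^+ 2 + (\sum_i dbl_snd (x i) (y i)) ^+ 2).
Proof.
pose r i := hypot (x i) (y i).
pose p i := dbl_fst (x i) (y i); pose q i := dbl_snd (x i) (y i).
pose s i := dbl_fst (p i) (q i); pose t i := dbl_snd (p i) (q i).
have majorant i j : `|x i * x j + y i * y j| <=
    2/3 * (r i * r j) + 7/18 * (p i * p j + q i * q j) - 1/18 * (s i * s j + t i * t j).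
  apply: abs_le_cos_majorant.
  - by rewrite mulr_ge0 ?hypot_ge0.
  - exact: sqr_inner_le_hypot.
  - exact: dbl_inner.
  - by rewrite dbl_inner !hypot_dbl.
apply: (le_trans (ler_sum _ (fun i _ => ler_sum _ (fun j _ => majorant i j)))).
have -> : \sum_i \sum_j (2/3 * (r i * r j) + 7/18 * (p i * p j + q i * q j)
                         - 1/18 * (s i * s j + t i * t j))
  = 2/3 * \sum_i \sum_j r i * r j + 7/18 * \sum_i \sum_j (p i * p j + q i * q j)
    - 1/18 * \sum_i \sum_j (s i * s j + t i * t j).
  rewrite !mulr_sumr -big_split -sumrB; apply: eq_bigr => i _.
  by rewrite !mulr_sumr -big_split -sumrB.
rewrite -mulr_sum_sum !sum_inner_sqr -expr2.
have := sqr_ge0 (\sum_i s i); have := sqr_ge0 (\sum_i t i); lra.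
Qed.

Lemma sum_abs_inner_le x y :
  \sum_i x i ^+ 2 = 1 -> \sum_i y i ^+ 2 = 1 -> \sum_i x i * y i = 0 ->
  \sum_i \sum_j `|x i * x j + y i * y j| <= 4 * n%:R / 3.
Proof.
move=> x1 y1 xy0.
have r2 : \sum_i hypot (x i) (y i) ^+ 2 = 2.
  by under eq_bigr do rewrite sqr_hypot; rewrite big_split /= x1 y1.
have pq2 : \sum_i dbl_fst (x i) (y i) ^+ 2 + \sum_i dbl_snd (x i) (y i) ^+ 2 = 2.
  rewrite -big_split /=; under eq_bigr do rewrite sqr_hypot_dbl.
  by rewrite big_split /= x1 y1.
have rp : \sum_i hypot (x i) (y i) * dbl_fst (x i) (y i) = 0.
  by under eq_bigr do rewrite hypot_mul_dbl_fst; rewrite sumrB x1 y1 subrr.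
have rq : \sum_i hypot (x i) (y i) * dbl_snd (x i) (y i) = 0.
  by under eq_bigr do rewrite hypot_mul_dbl_snd -mulrA; rewrite -mulr_sumr xy0 mulr0.
have r_gt0 : 0 < \sum_i hypot (x i) (y i) ^+ 2 by rewrite r2.
have := lerD (sqr_sum_le_orth r_gt0 rp) (sqr_sum_le_orth r_gt0 rq).
rewrite -mulrDr pq2 r2 => pq_le.
have sum_r_le : (\sum_i hypot (x i) (y i)) ^+ 2 <= n%:R * 2.
  have := cauchy_schwarz (fun=> 1) (fun i => hypot (x i) (y i)).
  by under eq_bigr do rewrite mul1r; rewrite r2 expr1n sumr_const card_ord.
apply: (le_trans (sum_abs_inner_le_dbl x y)); lra.
Qed.

Lemma quad_form_pair_ge (A : 'M[R]_n) x y :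
  (forall i j, i != j -> 0 <= A i j <= 1) -> (forall i, 0 <= A i i) ->
  \sum_i x i ^+ 2 = 1 -> \sum_i y i ^+ 2 = 1 -> \sum_i x i * y i = 0 ->
  - (2 * n%:R) / 3 <= \sum_i \sum_j A i j * (x i * x j + y i * y j).
Proof.
move=> A_off A_diag x1 y1 xy0.
have entry_ge i j : (x i * x j + y i * y j - `|x i * x j + y i * y j|) / 2
    <= A i j * (x i * x j + y i * y j).
  have [<-|/A_off/andP[A_ge0 A_le1]] := eqVneq i j.
    have g_ge0 : 0 <= x i * x i + y i * y i by rewrite -!expr2 addr_ge0 ?sqr_ge0.
    by rewrite ger0_norm // subrr mul0r mulr_ge0.
  have [g_ge0|g_lt0] := lerP 0 (x i * x j + y i * y j).
    by rewrite ger0_norm // subrr mul0r mulr_ge0.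
  by rewrite ltr0_norm //; nra.
apply: le_trans (ler_sum _ (fun i _ => ler_sum _ (fun j _ => entry_ge i j))).
have -> : \sum_i \sum_j (x i * x j + y i * y j - `|x i * x j + y i * y j|) / 2
  = (\sum_i \sum_j (x i * x j + y i * y j) - \sum_i \sum_j `|x i * x j + y i * y j|) / 2.
  by rewrite -sumrB mulr_suml; apply: eq_bigr => i _; rewrite -sumrB mulr_suml.
rewrite sum_inner_sqr.
have := sum_abs_inner_le x1 y1 xy0.
have := sqr_ge0 (\sum_i x i); have := sqr_ge0 (\sum_i y i); lra.
Qed.

End SumAbsInner.

Section RowDot.
Variable R : realFieldType.

Lemma row_dotE k (v w : 'rV[R]_k) : (v *m w^T) 0 0 = \sum_i v 0 i * w 0 i.
Proof. by rewrite mxE; apply: eq_bigr => i _; rewrite mxE. Qed.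

Lemma row_dot_selfE k (v : 'rV[R]_k) : (v *m v^T) 0 0 = \sum_i v 0 i ^+ 2.
Proof. by rewrite row_dotE; under eq_bigr do rewrite -expr2. Qed.

Lemma row_dot_self_eq0 k (v : 'rV[R]_k) : (v *m v^T) 0 0 = 0 -> v = 0.
Proof.
rewrite row_dot_selfE => /psumr_eq0P v0; apply/rowP => i; rewrite mxE.
by apply/eqP; rewrite -sqrf_eq0 v0 // => j _; apply: sqr_ge0.
Qed.

Lemma row_free_col_mx_orth m k (x : 'rV[R]_k) (W : 'M[R]_(m, k)) :
  x != 0 -> W *m x^T = 0 -> row_free W -> row_free (col_mx x W).
Proof.
move=> x_neq0 Wx W_free; rewrite -kermx_eq0; apply/eqP/row_matrixP => i.
rewrite row0; set u := row i _.
have : u *m col_mx x W = 0 by rewrite -row_mul mulmx_ker row0.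
rewrite -[u]hsubmxK mul_row_col => uxW.
have xx_neq0 : (x *m x^T) 0 0 != 0.
  by apply: contra x_neq0 => /eqP/row_dot_self_eq0 ->.
have ul0 : lsubmx u = 0.
  have := congr1 (mulmx^~ x^T) uxW.
  rewrite mul0mx mulmxDl -!mulmxA Wx mulmx0 addr0 [x *m _]mx11_scalar.
  by rewrite mul_mx_scalar => /eqP; rewrite scalemx_eq0 (negPf xx_neq0) => /eqP.
have ur0 : rsubmx u = 0.
  by apply/eqP; rewrite -(mulmx_free_eq0 _ W_free) -uxW ul0 mul0mx add0r.
by rewrite ul0 ur0 row_mx0.
Qed.

End RowDot.

Lemma char_poly_similar (F : fieldType) k (P A B : 'M[F]_k) :
  P \in unitmx -> P *m A = B *m P -> char_poly A = char_poly B.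
Proof.
move=> P_unit PA; pose Pp := map_mx (@polyC F) P.
have Pp_char : Pp *m char_poly_mx A = char_poly_mx B *m Pp.
  by rewrite mulmxBr mulmxBl mul_mx_scalar mul_scalar_mx -!map_mxM PA.
have detPp_neq0 : \det Pp != 0.
  by rewrite det_map_mx polyC_eq0 -unitfE -unitmxE.
apply: (mulfI detPp_neq0).
by rewrite /char_poly -det_mulmx Pp_char det_mulmx mulrC.
Qed.

Lemma sym_deflation (R : realFieldType) m (A : 'M[R]_m.+1) (x : 'rV_m.+1) l :
  A^T = A -> x != 0 -> x *m A = l *: x ->
  exists (W : 'M[R]_(m, m.+1)) (C : 'M[R]_m),
    [/\ W *m x^T = 0, row_free W, W *m A = C *m W &
        char_poly A = ('X - l%:P) * char_poly C].
Proof.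
move=> A_sym x_neq0 xA.
have rankK : \rank (kermx x^T) = m.
  by rewrite mxrank_ker mxrank_tr rank_rV x_neq0 subn1.
move: (row_base _) (eq_row_base (kermx x^T)) (row_base_free (kermx x^T)).
rewrite rankK => W W_ker W_free.
have Wx : W *m x^T = 0 by apply/sub_kermxP; rewrite W_ker.
have [C WA] : exists C, W *m A = C *m W.
  apply/submxP; rewrite W_ker; apply/sub_kermxP.
  by rewrite -mulmxA -{1}A_sym -trmx_mul xA linearZ /= -scalemxAr Wx scaler0.
exists W, C; split => //.
have P_unit : col_mx x W \in unitmx.
  by rewrite -row_free_unit row_free_col_mx_orth.
rewrite (char_poly_similar (B := block_mx l%:M 0 0 C) P_unit).
  by rewrite /char_poly char_block_diag_mx det_ublock det_mx11 !mxE eqxx mulr1n.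
by rewrite mul_col_mx mul_block_col xA WA mul_scalar_mx !mul0mx addr0 add0r.
Qed.

Lemma eigen_quad_form (R : comNzRingType) k (A : 'M[R]_k) (v : 'rV_k) c :
  v *m A = c *: v -> (v *m v^T) 0 0 = 1 ->
  c = \sum_i \sum_j A i j * (v 0 i * v 0 j).
Proof.
move=> vA v1; have <- : (v *m A *m v^T) 0 0 = c by rewrite vA -scalemxAl mxE v1 mulr1.
rewrite mxE; under eq_bigr => j _ do rewrite !mxE mulr_suml.
rewrite exchange_big; apply: eq_bigr => i _; apply: eq_bigr => j _; ring.
Qed.

Section OrthonormalEigenpair.
Variable R : rcfType.

Lemma row_normalize k (v : 'rV[R]_k) : v != 0 ->
  exists s : R, ((s *: v) *m (s *: v)^T) 0 0 = 1.
Proof.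
move=> v_neq0; set d := (v *m v^T) 0 0.
have d_ge0 : 0 <= d by rewrite /d row_dot_selfE sumr_ge0 // => i _; apply: sqr_ge0.
have d_neq0 : d != 0 by apply: contra v_neq0 => /eqP/row_dot_self_eq0 ->.
exists (Num.sqrt d)^-1.
rewrite linearZ /= -scalemxAl -scalemxAr scalerA mxE -/d -expr2 exprVn.
by rewrite sqr_sqrtr // mulVf.
Qed.

Lemma sym_orthonormal_eigenpair k (A : 'M[R]_k) a b q :
  A^T = A -> char_poly A = ('X - a%:P) * ('X - b%:P) * q ->
  exists x y : 'rV[R]_k, [/\ x *m A = a *: x, y *m A = b *: y,
    (x *m x^T) 0 0 = 1, (y *m y^T) 0 0 = 1 & (x *m y^T) 0 0 = 0].
Proof.
move=> A_sym charA.
have /eigenvalueP [x xA x_neq0] : eigenvalue A a.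
  by rewrite eigenvalue_root_char charA -mulrA rootM root_XsubC eqxx.
case: k A x A_sym charA xA x_neq0 => [|m] A x A_sym charA xA x_neq0.
  by rewrite thinmx0 eqxx in x_neq0.
have [W [C [Wx W_free WA charAC]]] := sym_deflation A_sym x_neq0 xA.
have /eigenvalueP [u uC u_neq0] : eigenvalue C b.
  have charC : char_poly C = ('X - b%:P) * q.
    by apply: (mulfI (negbT (polyXsubC_eq0 a))); rewrite -charAC charA mulrA.
  by rewrite eigenvalue_root_char charC rootM root_XsubC eqxx.
pose y := u *m W.
have yA : y *m A = b *: y by rewrite -mulmxA WA mulmxA uC -scalemxAl.
have y_neq0 : y != 0 by rewrite mulmx_free_eq0.
have xy : x *m y^T = 0 by rewrite trmx_mul mulmxA -[x]trmxK -trmx_mul Wx trmx0 mul0mx.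
have [s xs1] := row_normalize x_neq0; have [t yt1] := row_normalize y_neq0.
exists (s *: x), (t *: y); split => //.
- by rewrite -scalemxAl xA !scalerA mulrC.
- by rewrite -scalemxAl yA !scalerA mulrC.
- by rewrite linearZ /= -scalemxAl -scalemxAr xy !scaler0 mxE.
Qed.

End OrthonormalEigenpair.

Lemma cat_take_last2 (T : Type) (x0 : T) (s : seq T) : (2 <= size s)%N ->
  s = take (size s - 2) s ++ [:: nth x0 s (size s - 2); nth x0 s (size s - 1)].
Proof.
move=> s_ge2; have s_gt0 := ltnW s_ge2.
rewrite -{1}(cat_take_drop (size s - 2) s); congr (_ ++ _).
rewrite (drop_nth x0) ?ltn_subrL ?s_gt0 // subnSK //.
by rewrite (drop_nth x0) ?ltn_subrL ?s_gt0 // subnSK // subn0 drop_size.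
Qed.

Lemma sum_two_eigenvalues_ge (R : rcfType) n (A : 'M[R]_n) a b q :
  A^T = A -> (forall i j, i != j -> 0 <= A i j <= 1) -> (forall i, 0 <= A i i) ->
  char_poly A = ('X - a%:P) * ('X - b%:P) * q ->
  - (2 * n%:R) / 3 <= a + b.
Proof.
move=> A_sym A_off A_diag charA.
have [x [y [xA yA x1 y1 xy0]]] := sym_orthonormal_eigenpair A_sym charA.
rewrite (eigen_quad_form xA x1) (eigen_quad_form yA y1) -big_split /=.
under eq_bigr do rewrite -big_split /=.
under eq_bigr do under eq_bigr do rewrite -mulrDr.
apply: (quad_form_pair_ge (x := fun i => x 0 i) (y := fun i => y 0 i)) => //.
- by rewrite -row_dot_selfE.
- by rewrite -row_dot_selfE.
- by rewrite -row_dotE.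
Qed.

Theorem theorem1p2 (R : realType) (n : nat) (A : 'M[R]_n) (mu : seq R) :
  (2 <= n)%N ->
  A^T = A ->
  (forall i j : 'I_n, i != j -> 0 <= A i j <= 1) ->
  (forall i : 'I_n, 0 <= A i i) ->
  eigenvalues_desc A mu ->
  mu`_(n - 2) + mu`_(n - 1) >= - (2 * n%:R) / 3 /\
  mu`_(n - 2) >= - n%:R / 3.
Proof.
move=> n_ge2 A_sym A_off A_diag [size_mu sorted_mu charA].
have mu_le : mu`_(n - 1) <= mu`_(n - 2).
  have n_gt0 := ltnW n_ge2.
  apply: (sorted_leq_nth ge_trans lexx 0 sorted_mu).
  - by rewrite inE size_mu ltn_subrL n_gt0.
  - by rewrite inE size_mu ltn_subrL n_gt0.
  - by rewrite leq_sub2l.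
have [q charA2] : exists q,
    char_poly A = ('X - (mu`_(n - 1))%:P) * ('X - (mu`_(n - 2))%:P) * q.
  have mu_split : mu = take (n - 2) mu ++ [:: mu`_(n - 2); mu`_(n - 1)].
    by rewrite -size_mu; apply: cat_take_last2; rewrite size_mu.
  exists (\prod_(z <- take (n - 2) mu) ('X - z%:P)).
  by rewrite charA {1}mu_split big_cat /= !big_cons big_nil; ring.
have := sum_two_eigenvalues_ge A_sym A_off A_diag charA2.
split; lra.
Qed.
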